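(* Fix an integer $\theta\ge1$ and let $(U^\theta_n)_{n\ge0}$ be defined by $U^\theta_0=\dots=U^\theta_{\theta+1}=0$, $U^\theta_{\theta+2}=U^\theta_{\theta+3}=1$ and $$U^\theta_n=1+\frac{1}{n-\theta-1}\sum_{k=\theta}^{n-2}\left(U^\theta_k+U^\theta_{n-k-2}\right),\qquad n\ge\theta+2.$$ Then, as $n\to\infty$, $U^\theta_n\sim K_\theta\, n$ with $$K_\theta=e^{-1-H_{\theta+1}}\int_0^1 e^{t+\left(t+\frac{t^2}{2}+\dots+\frac{t^{\theta+1}}{\theta+1}\right)}\,dt,$$ where $H_{\theta+1}=1+\frac12+\dots+\frac{1}{\theta+1}$. In particular $K_1\approx 0.340633$, $K_2\approx0.285497$, $K_3\approx0.247908$.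
   Context: $U^\theta_n$ is the expected number of base pairs of a quasi-random saturated structure on $n$ positions, generated as follows: if the current interval has fewer than $\theta+2$ positions, stop; otherwise pair its first position with a position $u$ chosen uniformly among positions $\theta+2,\dots,m$ of the interval (where $m$ is its length), and recurse independently on the interval strictly between the two paired positions and on the interval strictly after $u$. *)

From Stdlib Require Export Reals.
Open Scope R_scope.

Definition harmonic (m : nat) : R :=
  sum_f_R0 (fun i => / INR (S i)) (pred m).

Definition trunc_log_series (m : nat) (t : R) : R :=
  sum_f_R0 (fun i => t ^ (S i) / INR (S i)) (pred m).

Definition K_integrand (theta : nat) (t : R) : R :=
  exp (t + trunc_log_series (S theta) t).

Definition is_U_seq (theta : nat) (U : nat -> R) : Prop :=
  (forall n, (n <= S theta)%nat -> U n = 0) /\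
  U (theta + 2)%nat = 1 /\ U (theta + 3)%nat = 1 /\
  (forall n, (theta + 2 <= n)%nat ->
     U n = 1 + / INR (n - theta - 1) *
             sum_f theta (n - 2) (fun k => U k + U (n - k - 2)%nat)).

From Stdlib Require Import Reals Lra Lia Psatz Arith.
Open Scope R_scope.

(* Put m = θ + 1 and S_k = U_0 + ... + U_k.  Clearing the denominator, the recurrence
   reads (n - m) U_n = (n - m) + S_(n-2) + S_(n-m-1).  Differencing twice, the numbers
   q_j = Δ²U_(j+m) satisfy q_0 = 0 and
       (j + 1) q_(j+1) = [j = 0] - q_j - (q_j + q_(j-1) + ... + q_(j-m+1)),
   i.e. Q = Σ q_j x^j formally solves Q' + P_m Q = 1 with P_m = 1 + (1 + x + ... + x^(m-1)).
   The weight E_m(x) = exp(x + x + x^2/2 + ... + x^m/m) satisfies E_m' = E_m P_m, so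
   (E_m Q)' = E_m and formally E_m(1) Q(1) = ∫_0^1 E_m.  Instead of proving that the
   power series converges, we use the truncations Q_N: (E_m Q_N)' = E_m (1 + D_N), where
   the defect D_N only involves the last m + 1 coefficients.  The recurrence gives
   q_j = O(1/j), hence D_N -> 0 uniformly on [0, 1] and q_0 + ... + q_N -> ∫_0^1 E_m / E_m(1).
   As q_0 + ... + q_N = ΔU_(N+m), Cesàro's lemma turns this into U_n / n -> ∫_0^1 E_m / E_m(1),
   and E_m(1) = e^(1 + H_m) identifies the limit with K_θ. *)

Lemma sum_term_le (g : nat -> R) (n k : nat) :
  (forall i, 0 <= g i) -> (k <= n)%nat -> g k <= sum_f_R0 g n.
Proof.
  intros Hpos; induction n as [|n IH]; intros Hk.
  - replace k with 0%nat by lia; simpl; lra.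
  - simpl; destruct (Nat.eq_dec k (S n)) as [->|Hne].
    + assert (0 <= sum_f_R0 g n) by (apply cond_pos_sum; auto); lra.
    + specialize (IH ltac:(lia)); specialize (Hpos (S n)); lra.
Qed.

Lemma sum_abs_le (g G : nat -> R) (n : nat) :
  (forall i, (i <= n)%nat -> Rabs (g i) <= G i) -> Rabs (sum_f_R0 g n) <= sum_f_R0 G n.
Proof.
  intros H; eapply Rle_trans; [apply sum_f_R0_triangle | apply sum_Rle; auto].
Qed.

Lemma sum_shift_zeros (s M : nat) (g : nat -> R) :
  (forall i, (i < s)%nat -> g i = 0) ->
  sum_f_R0 (fun i => g (i + s)%nat) M = sum_f_R0 g (M + s).
Proof.
  intros Hz; induction M as [|M IH].
  - simpl; destruct s as [|s]; simpl; [reflexivity|].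
    rewrite sum_eq_R0; [ring | intros; apply Hz; lia].
  - simpl; rewrite IH; reflexivity.
Qed.

Lemma sum_reverse (g : nat -> R) (M : nat) :
  sum_f_R0 (fun i => g (M - i)%nat) M = sum_f_R0 g M.
Proof.
  induction M as [|M IH]; [reflexivity|].
  rewrite decomp_sum by lia; simpl pred; rewrite Nat.sub_0_r.
  rewrite (sum_eq _ (fun i => g (M - i)%nat)) by (intros; reflexivity).
  rewrite IH; simpl; ring.
Qed.

Lemma sum_telescope (g : nat -> R) (k p : nat) :
  sum_f_R0 (fun i => g (k - i)%nat - g (pred (k - i))) p = g k - g (k - S p)%nat.
Proof.
  induction p as [|p IH]; simpl.
  - rewrite Nat.sub_0_r; replace (pred k) with (k - 1)%nat by lia; ring.
  - rewrite IH; replace (pred (k - S p)) with (k - S (S p))%nat by lia; ring.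
Qed.

Lemma cv0_abs_shift (u : nat -> R) (l : nat) :
  Un_cv u 0 -> Un_cv (fun N => Rabs (u (N - l)%nat)) 0.
Proof.
  intros Hu e He; destruct (Hu e He) as [N0 HN0]; exists (N0 + l)%nat.
  intros n Hn; unfold Rdist in *; rewrite Rminus_0_r, Rabs_Rabsolu.
  specialize (HN0 (n - l)%nat ltac:(lia)); rewrite Rminus_0_r in HN0; exact HN0.
Qed.

Lemma cv0_finite_sum (g : nat -> nat -> R) (k : nat) :
  (forall i, Un_cv (g i) 0) -> Un_cv (fun N => sum_f_R0 (fun i => g i N) k) 0.
Proof.
  intros H; induction k as [|k IH]; simpl; [apply H|].
  replace 0 with (0 + 0) by ring; apply CV_plus; auto.
Qed.

Lemma derivable_pt_lim_sum (g dg : nat -> R -> R) (n : nat) (x : R) :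
  (forall i, derivable_pt_lim (g i) x (dg i x)) ->
  derivable_pt_lim (fun y => sum_f_R0 (fun i => g i y) n) x (sum_f_R0 (fun i => dg i x) n).
Proof.
  intros H; induction n as [|n IH]; simpl; [apply H|].
  apply (derivable_pt_lim_plus (fun y => sum_f_R0 (fun i => g i y) n) (g (S n))); auto.
Qed.

Lemma derivable_pt_lim_monomial (c : R) (j : nat) (x : R) :
  derivable_pt_lim (fun y => c * y ^ j) x (c * (INR j * x ^ pred j)).
Proof.
  apply (derivable_pt_lim_scal (fun y => y ^ j)); apply derivable_pt_lim_pow.
Qed.

Definition weight (m : nat) (x : R) : R := exp (x + trunc_log_series m x).

(* The logarithmic derivative of E_m: P_m(x) = 1 + (1 + x + ... + x^(m-1)). *)
Definition log_deriv_weight (m : nat) (x : R) : R := 1 + sum_f_R0 (fun i => x ^ i) (pred m).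

Lemma derivable_pt_lim_trunc_log_series (m : nat) (x : R) :
  derivable_pt_lim (trunc_log_series m) x (sum_f_R0 (fun i => x ^ i) (pred m)).
Proof.
  apply (derivable_pt_lim_sum (fun i y => y ^ S i / INR (S i)) (fun i y => y ^ i)).
  intros i.
  replace (x ^ i) with (INR (S i) * x ^ pred (S i) * / INR (S i))
    by (simpl pred; field; apply not_0_INR; lia).
  apply derivable_pt_lim_scal_right, derivable_pt_lim_pow.
Qed.

(* E_m' = E_m P_m: the weight is the integrating factor of y' + P_m y. *)
Lemma derivable_pt_lim_weight (m : nat) (x : R) :
  derivable_pt_lim (weight m) x (weight m x * log_deriv_weight m x).
Proof.
  apply (derivable_pt_lim_comp (fun y => y + trunc_log_series m y) exp).
  - apply (derivable_pt_lim_plus id (trunc_log_series m)).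
    + apply derivable_pt_lim_id.
    + apply derivable_pt_lim_trunc_log_series.
  - apply derivable_pt_lim_exp.
Qed.

Lemma continuity_weight (m : nat) (x : R) : continuity_pt (weight m) x.
Proof.
  apply derivable_continuous_pt; eexists; apply derivable_pt_lim_weight.
Qed.

Lemma weight_le_weight_1 (m : nat) (x : R) : 0 <= x <= 1 -> weight m x <= weight m 1.
Proof.
  intros Hx; unfold weight.
  assert (trunc_log_series m x <= trunc_log_series m 1).
  { apply sum_Rle; intros i _; unfold Rdiv.
    apply Rmult_le_compat_r; [left; apply Rinv_0_lt_compat, lt_0_INR; lia|].
    apply pow_incr; lra. }
  destruct (Rle_lt_or_eq_dec (x + trunc_log_series m x) (1 + trunc_log_series m 1))
    as [Hlt | ->]; [lra | left; apply exp_increasing; exact Hlt | lra].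
Qed.

Lemma weight_1 (m : nat) : weight m 1 = exp (1 + harmonic m).
Proof.
  unfold weight; f_equal; f_equal.
  apply sum_eq; intros; rewrite pow1; unfold Rdiv; ring.
Qed.

Lemma RiemannInt_primitive (G g : R -> R) (a b : R) (pr : Riemann_integrable g a b) :
  a <= b ->
  (forall x, a <= x <= b -> continuity_pt g x) ->
  (forall x, a <= x <= b -> derivable_pt_lim G x (g x)) ->
  RiemannInt pr = G b - G a.
Proof.
  intros Hab Hcont Hder.
  rewrite (RiemannInt_P20 Hab (FTC_P1 Hab Hcont) pr).
  assert (Hanti : antiderivative g G a b).
  { split; auto; intros x Hx; exists (exist _ (g x) (Hder x Hx)); reflexivity. }
  destruct (antiderivative_Ucte g _ _ _ _ (RiemannInt_P29 Hab Hcont) Hanti) as [C HC].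
  rewrite (HC b), (HC a) by lra; ring.
Qed.

Lemma RiemannInt_close (f g : R -> R) (a b c : R)
  (prf : Riemann_integrable f a b) (prg : Riemann_integrable g a b) :
  a <= b -> (forall x, a < x < b -> Rabs (g x - f x) <= c) ->
  Rabs (RiemannInt prg - RiemannInt prf) <= c * (b - a).
Proof.
  intros Hab Hclose.
  assert (Hband : forall x, a < x < b -> f x + - c * fct_cte 1 x <= g x <= f x + c * fct_cte 1 x).
  { intros x Hx; unfold fct_cte; specialize (Hclose x Hx).
    pose proof (Rle_abs (g x - f x)); pose proof (Rle_abs (- (g x - f x))).
    rewrite Rabs_Ropp in *; lra. }
  pose proof (RiemannInt_P10 c prf (RiemannInt_P14 a b 1)) as pru.
  pose proof (RiemannInt_P10 (- c) prf (RiemannInt_P14 a b 1)) as prl.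
  assert (Hup := RiemannInt_P19 prg pru Hab (fun x Hx => proj2 (Hband x Hx))).
  assert (Hlow := RiemannInt_P19 prl prg Hab (fun x Hx => proj1 (Hband x Hx))).
  rewrite (RiemannInt_P13 prf (RiemannInt_P14 a b 1) pru), RiemannInt_P15 in Hup.
  rewrite (RiemannInt_P13 prf (RiemannInt_P14 a b 1) prl), RiemannInt_P15 in Hlow.
  apply Rabs_le; lra.
Qed.

Definition dirac0 (j : nat) : R := if Nat.eqb j 0 then 1 else 0.

Section TruncatedEquation.

(* q_j are the Taylor coefficients of the solution of Q' + P_m Q = 1, Q(0) = 0,
   written as a recurrence on coefficients. *)
Variable m : nat.
Variable q : nat -> R.
Hypothesis q_0 : q 0%nat = 0.
Hypothesis q_rec : forall j,
  INR (S j) * q (S j) = dirac0 j - q j - sum_f_R0 (fun i => q (j - i)%nat) (pred m).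

Definition Qtrunc (N : nat) (x : R) : R := sum_f_R0 (fun j => q j * x ^ j) N.
Definition Qtrunc_deriv (N : nat) (x : R) : R :=
  sum_f_R0 (fun j => q j * (INR j * x ^ pred j)) N.

Definition defect (N : nat) (x : R) : R :=
  log_deriv_weight m x * Qtrunc N x + Qtrunc_deriv N x - 1.

(* The part of D_N coming from the last m coefficients:
   W_N(x) = sum_(i < m) sum_(l <= i) q_(N-l) x^(N-l+i). *)
Definition defect_tail (N : nat) (x : R) : R :=
  sum_f_R0 (fun i => sum_f_R0 (fun l => q (N - l)%nat * x ^ (N - l + i)) i) (pred m).

Lemma derivable_pt_lim_Qtrunc (N : nat) (x : R) :
  derivable_pt_lim (Qtrunc N) x (Qtrunc_deriv N x).
Proof.
  apply (derivable_pt_lim_sum (fun j y => q j * y ^ j) (fun j y => q j * (INR j * y ^ pred j))).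
  intros j; apply derivable_pt_lim_monomial.
Qed.

(* (E_m Q_N)' = E_m (1 + D_N): since E_m' = E_m P_m, only the defect spoils (E_m Q)' = E_m. *)
Lemma derivable_pt_lim_weight_Qtrunc (N : nat) (x : R) :
  derivable_pt_lim (fun y => weight m y * Qtrunc N y) x (weight m x * (1 + defect N x)).
Proof.
  replace (weight m x * (1 + defect N x)) with
    (weight m x * log_deriv_weight m x * Qtrunc N x + weight m x * Qtrunc_deriv N x)
    by (unfold defect; ring).
  apply (derivable_pt_lim_mult (weight m) (Qtrunc N)).
  - apply derivable_pt_lim_weight.
  - apply derivable_pt_lim_Qtrunc.
Qed.

Lemma continuity_defect (N : nat) (x : R) : continuity_pt (defect N) x.
Proof.
  unfold defect, log_deriv_weight, Qtrunc, Qtrunc_deriv.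
  apply continuity_pt_minus; [apply continuity_pt_plus; [apply continuity_pt_mult|] | reg].
  - apply continuity_pt_plus; [reg | apply continuity_pt_finite_SF; intros; reg].
  - apply continuity_pt_finite_SF; intros; reg.
  - apply continuity_pt_finite_SF; intros; reg.
Qed.

(* Since q_0 = 0, the exponent N - i + i may be read as N even when i > N. *)
Lemma q_pow_sub_add (k i : nat) (x : R) :
  q (k - i)%nat * x ^ (k - i + i) = q (k - i)%nat * x ^ k.
Proof.
  destruct (le_lt_dec i k) as [Hik | Hki].
  - rewrite Nat.sub_add; auto.
  - replace (k - i)%nat with 0%nat by lia; rewrite q_0; ring.
Qed.

Lemma defect_tail_inner_step (N i : nat) (x : R) :
  sum_f_R0 (fun l => q (S N - l)%nat * x ^ (S N - l + i)) i =
  q (S N) * x ^ (S N + i) + sum_f_R0 (fun l => q (N - l)%nat * x ^ (N - l + i)) i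
  - q (N - i)%nat * x ^ N.
Proof.
  destruct i as [|i].
  - simpl; rewrite !Nat.sub_0_r, !Nat.add_0_r; ring.
  - rewrite decomp_sum by lia; simpl pred.
    change (sum_f_R0 (fun l => q (N - l)%nat * x ^ (N - l + S i)) (S i)) with
      (sum_f_R0 (fun l => q (N - l)%nat * x ^ (N - l + S i)) i
       + q (N - S i)%nat * x ^ (N - S i + S i)).
    rewrite q_pow_sub_add, Nat.sub_0_r.
    rewrite (sum_eq (fun l => q (S N - S l)%nat * x ^ (S N - S l + S i))
                    (fun l => q (N - l)%nat * x ^ (N - l + S i))) by reflexivity.
    ring.
Qed.

Lemma defect_tail_step (N : nat) (x : R) :
  defect_tail (S N) x =
  defect_tail N x + q (S N) * x ^ S N * sum_f_R0 (fun i => x ^ i) (pred m)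
  - x ^ N * sum_f_R0 (fun i => q (N - i)%nat) (pred m).
Proof.
  unfold defect_tail.
  rewrite (sum_eq _ (fun i => sum_f_R0 (fun l => q (N - l)%nat * x ^ (N - l + i)) i
                              + (x ^ i * (q (S N) * x ^ S N) - q (N - i)%nat * x ^ N)))
    by (intros; rewrite defect_tail_inner_step, pow_add; ring).
  rewrite plus_sum, minus_sum, <- !scal_sum.
  change (sum_f_R0 (pow x)) with (sum_f_R0 (fun i => x ^ i)); ring.
Qed.

(* The defect is carried by the last m + 1 coefficients only:
   D_N(x) = q_N x^N + W_N(x) - [N = 0]. *)
Lemma defect_closed_form (N : nat) (x : R) :
  defect N x = q N * x ^ N + defect_tail N x - dirac0 N.
Proof.
  induction N as [|N IH].
  - unfold defect, Qtrunc, Qtrunc_deriv, defect_tail, dirac0; simpl; rewrite q_0.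
    rewrite (sum_eq_R0 _ (pred m)); [ring|].
    intros i _; apply sum_eq_R0; intros; simpl; ring.
  - assert (Hstep : defect (S N) x = defect N x
       + log_deriv_weight m x * (q (S N) * x ^ S N) + x ^ N * (INR (S N) * q (S N)))
      by (unfold defect, Qtrunc, Qtrunc_deriv; simpl; ring).
    rewrite Hstep, IH, q_rec, defect_tail_step.
    unfold log_deriv_weight, dirac0; destruct N; simpl; ring.
Qed.
End TruncatedEquation.

Lemma Rabs_mult_pow_le (c x : R) (k : nat) : 0 <= x <= 1 -> Rabs (c * x ^ k) <= Rabs c.
Proof.
  intros Hx; rewrite Rabs_mult, (Rabs_right (x ^ k)) by (apply Rle_ge, pow_le; lra).
  assert (x ^ k <= 1) by (rewrite <- (pow1 k); apply pow_incr; lra).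
  pose proof (Rabs_pos c); nra.
Qed.

Section Decay.

(* The same coefficients, now with m >= 1 so that the recurrence involves m earlier terms. *)
Variable m : nat.
Hypothesis m_pos : (1 <= m)%nat.
Variable q : nat -> R.
Hypothesis q_0 : q 0%nat = 0.
Hypothesis q_rec : forall j,
  INR (S j) * q (S j) = dirac0 j - q j - sum_f_R0 (fun i => q (j - i)%nat) (pred m).

(* A bound on |D_N| over [0, 1] in terms of the last m coefficients. *)
Definition tail_norm (N : nat) : R :=
  Rabs (q N) + sum_f_R0 (fun i => sum_f_R0 (fun l => Rabs (q (N - l)%nat)) i) (pred m).

(* For N >= 1 the Kronecker term is gone and each monomial is at most its coefficient. *)
Lemma defect_bound (N : nat) (x : R) :
  (1 <= N)%nat -> 0 <= x <= 1 -> Rabs (defect m q N x) <= tail_norm N.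
Proof.
  intros HN Hx; rewrite (defect_closed_form m q q_0 q_rec).
  replace (dirac0 N) with 0 by (unfold dirac0; destruct N; [lia | reflexivity]).
  rewrite Rminus_0_r; eapply Rle_trans; [apply Rabs_triang | apply Rplus_le_compat].
  - apply Rabs_mult_pow_le; auto.
  - apply sum_abs_le; intros i _; apply sum_abs_le; intros l _; apply Rabs_mult_pow_le; auto.
Qed.

(* For j >= 1 the recurrence expresses q_(j+1) as an average of m + 1 earlier
   coefficients divided by j + 1. *)
Lemma q_succ_bound (j : nat) (C : R) :
  (1 <= j)%nat -> (forall k, (k <= j)%nat -> Rabs (q k) <= C) ->
  Rabs (q (S j)) <= INR (S m) * C / INR (S j).
Proof.
  intros Hj HC.
  assert (HSj : 0 < INR (S j)) by (apply lt_0_INR; lia).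
  assert (Hq : q (S j) = (- q j - sum_f_R0 (fun i => q (j - i)%nat) (pred m)) / INR (S j)).
  { replace (- q j) with (dirac0 j - q j) by (unfold dirac0; destruct j; [lia | simpl; ring]).
    rewrite <- q_rec; field; lra. }
  assert (Hsum : Rabs (sum_f_R0 (fun i => q (j - i)%nat) (pred m)) <= INR m * C).
  { eapply Rle_trans; [apply sum_abs_le with (G := fun _ => C); intros; apply HC; lia|].
    rewrite sum_cte; replace (S (pred m)) with m by lia; lra. }
  assert (Hqj := HC j (le_n j)).
  rewrite Hq; unfold Rdiv; rewrite Rabs_mult, Rabs_inv, (Rabs_right (INR (S j))) by lra.
  apply Rmult_le_compat_r; [left; apply Rinv_0_lt_compat; lra|].
  unfold Rminus; eapply Rle_trans; [apply Rabs_triang|].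
  rewrite Rabs_Ropp, Rabs_Ropp, S_INR; lra.
Qed.

(* A bound for the first m + 2 coefficients, propagated by q_succ_bound. *)
Definition q_sup : R := sum_f_R0 (fun j => Rabs (q j)) (S m).

Lemma q_sup_nonneg : 0 <= q_sup.
Proof. apply cond_pos_sum; intros; apply Rabs_pos. Qed.

Lemma q_bounded (n : nat) : Rabs (q n) <= q_sup.
Proof.
  assert (Hall : forall N k, (k <= N)%nat -> Rabs (q k) <= q_sup).
  { induction N as [|N IH]; intros k Hk.
    - apply (sum_term_le (fun j => Rabs (q j))); [intros; apply Rabs_pos | lia].
    - destruct (Nat.eq_dec k (S N)) as [->|Hne]; [|apply IH; lia].
      destruct (le_lt_dec (S N) (S m)) as [Hsmall | Hlarge].
      + apply (sum_term_le (fun j => Rabs (q j))); [intros; apply Rabs_pos | lia].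
      + eapply Rle_trans; [apply q_succ_bound; [lia | exact IH]|].
        pose proof q_sup_nonneg.
        assert (INR (S m) <= INR (S N)) by (apply le_INR; lia).
        assert (0 < INR (S N)) by (apply lt_0_INR; lia).
        apply (Rmult_le_reg_r (INR (S N))); auto.
        unfold Rdiv; rewrite Rmult_assoc, Rinv_l by lra; nra. }
  apply (Hall n n); lia.
Qed.

(* q_j = O(1/j), so the coefficients tend to 0. *)
Lemma q_cv0 : Un_cv q 0.
Proof.
  intros e He.
  set (A := INR (S m) * q_sup + 1).
  assert (HA0 : 0 <= INR (S m) * q_sup) by (apply Rmult_le_pos; [apply pos_INR | apply q_sup_nonneg]).
  assert (HA : 0 < A) by (unfold A; lra).
  destruct (archimed_cor1 (e / A)) as [N [HN HN0]]; [apply Rdiv_lt_0_compat; auto|].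
  exists (S (S N)); intros n Hn; unfold Rdist; rewrite Rminus_0_r.
  destruct n as [|j]; [lia|].
  eapply Rle_lt_trans; [apply q_succ_bound; [lia | intros; apply q_bounded]|].
  assert (0 < INR N) by (apply lt_0_INR; lia).
  assert (INR N <= INR (S j)) by (apply le_INR; lia).
  apply Rle_lt_trans with (A / INR N).
  - unfold Rdiv; apply Rmult_le_compat; try lra.
    + left; apply Rinv_0_lt_compat, lt_0_INR; lia.
    + unfold A; lra.
    + apply Rinv_le_contravar; lra.
  - apply (Rmult_lt_reg_r (/ A)); [apply Rinv_0_lt_compat; auto|].
    replace (A / INR N * / A) with (/ INR N) by (field; lra); exact HN.
Qed.

Lemma tail_norm_cv0 : Un_cv tail_norm 0.
Proof.
  unfold tail_norm; replace 0 with (0 + 0) by ring; apply CV_plus.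
  - apply (Un_cv_ext (fun N => Rabs (q (N - 0)%nat))); [intros; rewrite Nat.sub_0_r; reflexivity|].
    apply cv0_abs_shift, q_cv0.
  - apply (cv0_finite_sum (fun i N => sum_f_R0 (fun l => Rabs (q (N - l)%nat)) i)); intros i.
    apply (cv0_finite_sum (fun l N => Rabs (q (N - l)%nat))); intros l.
    apply cv0_abs_shift, q_cv0.
Qed.

Lemma partial_sum_integral_error (N : nat) (pr : Riemann_integrable (weight m) 0 1) :
  (1 <= N)%nat ->
  Rabs (weight m 1 * sum_f_R0 q N - RiemannInt pr) <= weight m 1 * tail_norm N.
Proof.
  intros HN.
  set (h x := weight m x * (1 + defect m q N x)).
  assert (Hcont : forall x, continuity_pt h x).
  { intros x; apply continuity_pt_mult; [apply continuity_weight|].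
    apply continuity_pt_plus; [reg | apply continuity_defect]. }
  assert (prh : Riemann_integrable h 0 1) by (apply continuity_implies_RiemannInt; auto; lra).
  assert (Hint : RiemannInt prh = weight m 1 * sum_f_R0 q N).
  { rewrite (RiemannInt_primitive (fun y => weight m y * Qtrunc q N y) h 0 1 prh); try lra.
    - unfold Qtrunc; rewrite (sum_eq _ q) by (intros; rewrite pow1; ring).
      rewrite (sum_eq_R0 (fun j => q j * 0 ^ j) N) by (intros [|j] _; simpl; [rewrite q_0|]; ring); ring.
    - intros; apply Hcont.
    - intros; apply derivable_pt_lim_weight_Qtrunc. }
  rewrite <- Hint.
  replace (weight m 1 * tail_norm N) with (weight m 1 * tail_norm N * (1 - 0)) by ring.
  apply RiemannInt_close; [lra|]; intros x Hx; unfold h.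
  replace (weight m x * (1 + defect m q N x) - weight m x) with (weight m x * defect m q N x) by ring.
  assert (HE : 0 < weight m x) by apply exp_pos.
  rewrite Rabs_mult, (Rabs_right (weight m x)) by lra.
  apply Rmult_le_compat; [lra | apply Rabs_pos | apply weight_le_weight_1; lra | apply defect_bound; auto; lra].
Qed.

Lemma partial_sums_cv (pr : Riemann_integrable (weight m) 0 1) :
  Un_cv (fun N => sum_f_R0 q N) (RiemannInt pr / weight m 1).
Proof.
  intros e He.
  assert (HE1 : 0 < weight m 1) by apply exp_pos.
  destruct (tail_norm_cv0 (e / 2) ltac:(lra)) as [N0 HN0].
  exists (S N0); intros n Hn.
  specialize (HN0 n ltac:(lia)); unfold Rdist in *; rewrite Rminus_0_r in HN0.
  assert (Herr := partial_sum_integral_error n pr ltac:(lia)).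
  assert (Hnn : 0 <= tail_norm n)
    by (eapply Rle_trans; [apply Rabs_pos | apply (defect_bound n 0); [lia | lra]]).
  rewrite Rabs_right in HN0 by lra.
  replace (sum_f_R0 q n - RiemannInt pr / weight m 1)
    with ((weight m 1 * sum_f_R0 q n - RiemannInt pr) / weight m 1) by (field; lra).
  unfold Rdiv; rewrite Rabs_mult, (Rabs_right (/ weight m 1)) by (left; apply Rinv_0_lt_compat; auto).
  apply (Rmult_lt_reg_r (weight m 1)); auto; rewrite Rmult_assoc, Rinv_l by lra; nra.
Qed.
End Decay.

Section Differences.

(* a_n = U_n with m = θ + 1, after clearing the denominator of the recurrence. *)
Variable m : nat.
Hypothesis m_ge_2 : (2 <= m)%nat.
Variable a : nat -> R.
Hypothesis a_init : forall n, (n <= m)%nat -> a n = 0.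
Hypothesis a_rec : forall n,
  INR (n - m) * a n = INR (n - m) + sum_f_R0 a (n - 2) + sum_f_R0 a (n - m - 1).

Definition diff1 (n : nat) : R := a n - a (pred n).
Definition diff2 (n : nat) : R := diff1 n - diff1 (pred n).

Lemma diff1_init (n : nat) : (n <= m)%nat -> diff1 n = 0.
Proof. intros; unfold diff1; rewrite !a_init by lia; ring. Qed.

Lemma diff2_init (n : nat) : (n <= m)%nat -> diff2 n = 0.
Proof. intros; unfold diff2; rewrite !diff1_init by lia; ring. Qed.

Lemma partial_sum_diff (k : nat) : sum_f_R0 a k - sum_f_R0 a (pred k) = a k.
Proof. destruct k; simpl; [rewrite a_init by lia|]; ring. Qed.

Lemma first_difference_rec (n : nat) : (m <= n)%nat ->
  (INR (n - m) + 1) * diff1 (S n) = 1 + a (n - m) - diff1 n.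
Proof.
  intros Hn.
  assert (Hnext := a_rec (S n)); assert (Hcur := a_rec n).
  replace (S n - m)%nat with (S (n - m)) in Hnext by lia; rewrite S_INR in Hnext.
  replace (S (n - m) - 1)%nat with (n - m)%nat in Hnext by lia.
  replace (n - m - 1)%nat with (pred (n - m)) in Hcur by lia.
  replace (S n - 2)%nat with (S (n - 2)) in Hnext by lia.
  assert (Hsum1 : sum_f_R0 a (S (n - 2)) - sum_f_R0 a (n - 2) = a (pred n))
    by (simpl; replace (S (n - 2)) with (pred n) by lia; ring).
  assert (Hsum2 := partial_sum_diff (n - m)).
  unfold diff1; simpl pred; nra.
Qed.

Lemma second_difference_rec (j : nat) :
  INR (S j) * diff2 (S (j + m)) = dirac0 j - diff2 (j + m) - (diff1 (j + m) - diff1 j).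
Proof.
  assert (Hnext := first_difference_rec (j + m) ltac:(lia)).
  replace (j + m - m)%nat with j in Hnext by lia.
  destruct j as [|j].
  - simpl plus in *; rewrite (a_init 0), (diff1_init m) in Hnext by lia.
    rewrite (diff2_init m), (diff1_init m), (diff1_init 0) by lia.
    change (dirac0 0) with 1; unfold diff2; simpl pred.
    rewrite (diff1_init m) by lia; simpl INR in *; lra.
  - assert (Hcur := first_difference_rec (j + m) ltac:(lia)).
    replace (j + m - m)%nat with j in Hcur by lia.
    change (dirac0 (S j)) with 0.
    assert (Hdj : diff1 (S j) = a (S j) - a j) by reflexivity.
    unfold diff2; simpl pred; simpl plus in *; rewrite Hdj, !S_INR in *; lra.
Qed.

Definition coef (j : nat) : R := diff2 (j + m).

Lemma coef_0 : coef 0 = 0.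
Proof. apply diff2_init; lia. Qed.

Lemma coef_rec (j : nat) :
  INR (S j) * coef (S j) = dirac0 j - coef j - sum_f_R0 (fun i => coef (j - i)%nat) (pred m).
Proof.
  unfold coef; simpl plus; rewrite second_difference_rec; f_equal.
  replace (diff1 (j + m) - diff1 j)
    with (sum_f_R0 (fun i => diff1 (j + m - i)%nat - diff1 (pred (j + m - i))) (pred m))
    by (rewrite sum_telescope; do 3 f_equal; lia).
  apply sum_eq; intros i Hi; fold (diff2 (j + m - i)).
  destruct (le_lt_dec i j).
  - f_equal; lia.
  - rewrite !diff2_init by lia; reflexivity.
Qed.

Lemma sum_coef (N : nat) : sum_f_R0 coef N = diff1 (N + m).
Proof.
  induction N as [|N IH]; simpl.
  - rewrite coef_0, diff1_init by lia; reflexivity.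
  - rewrite IH; unfold coef, diff2; simpl; ring.
Qed.

Lemma a_as_sum (n : nat) : a n = sum_f_R0 (fun j => diff1 (S j)) (pred n).
Proof.
  assert (Hsucc : forall k, a (S k) = sum_f_R0 (fun j => diff1 (S j)) k).
  { induction k as [|k IH]; simpl; rewrite <- ?IH; unfold diff1; simpl;
      [rewrite (a_init 0) by lia|]; ring. }
  destruct n as [|n]; [simpl; unfold diff1; simpl; rewrite !a_init by lia; ring | apply Hsucc].
Qed.

(* If the partial sums of q converge to K, so do Δa_n, hence (Cesàro) a_n / n. *)
Lemma ratio_cv_of_coef_sums (K : R) :
  Un_cv (fun N => sum_f_R0 coef N) K -> Un_cv (fun n => a n / INR n) K.
Proof.
  intros Hcoef.
  assert (Hdiff : Un_cv (fun j => diff1 (S j)) K).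
  { intros e He; destruct (Hcoef e He) as [N HN]; exists (N + m)%nat; intros n Hn.
    specialize (HN (S n - m)%nat ltac:(lia)); rewrite sum_coef in HN.
    replace (S n - m + m)%nat with (S n) in HN by lia; exact HN. }
  apply (Un_cv_ext (fun n => sum_f_R0 (fun j => diff1 (S j)) (pred n) / INR n)).
  - intros n; rewrite a_as_sum; reflexivity.
  - apply Cesaro_1; exact Hdiff.
Qed.
End Differences.

(* Clearing the denominator: with m = θ + 1 and S_k = U_0 + ... + U_k,
   (n - m) U_n = (n - m) + S_(n-2) + S_(n-m-1) for every n (both sides vanish for n <= m). *)
Lemma U_rec_cleared (theta : nat) (U : nat -> R) :
  is_U_seq theta U ->
  forall n, INR (n - S theta) * U n =
            INR (n - S theta) + sum_f_R0 U (n - 2) + sum_f_R0 U (n - S theta - 1).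
Proof.
  intros [U_init [_ [_ U_rec]]] n.
  destruct (le_lt_dec n (S theta)) as [Hsmall | Hlarge].
  - replace (n - S theta)%nat with 0%nat by lia; simpl INR.
    rewrite (sum_eq_R0 U (n - 2)) by (intros; apply U_init; lia).
    simpl; rewrite (U_init 0%nat) by lia; ring.
  - rewrite (U_rec n) by lia.
    replace (n - theta - 1)%nat with (n - S theta)%nat by lia.
    assert (Hpos : INR (n - S theta) <> 0) by (apply not_0_INR; lia).
    field_simplify; [|exact Hpos].
    unfold sum_f.
    rewrite (sum_eq _ (fun i => U (i + theta)%nat + U (n - 2 - theta - i)%nat))
      by (intros; simpl; do 2 f_equal; lia).
    rewrite plus_sum, sum_reverse, sum_shift_zeros by (intros; apply U_init; lia).
    replace (n - 2 - theta + theta)%nat with (n - 2)%nat by lia.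
    replace (n - 2 - theta)%nat with (n - S theta - 1)%nat by lia; ring.
Qed.

Theorem mainTheorem10 (theta : nat) (U : nat -> R) :
  (1 <= theta)%nat ->
  is_U_seq theta U ->
  exists pr : Riemann_integrable (K_integrand theta) 0 1,
    Un_cv (fun n => U n / INR n)
      (exp (-1 - harmonic (S theta)) * RiemannInt pr).
Proof.
  intros Htheta HU.
  set (m := S theta).
  assert (Hm : (2 <= m)%nat) by (unfold m; lia).
  assert (U_init : forall n, (n <= m)%nat -> U n = 0) by apply HU.
  assert (pr : Riemann_integrable (weight m) 0 1)
    by (apply continuity_implies_RiemannInt; [lra | intros; apply continuity_weight]).
  exists pr; change (K_integrand theta) with (weight m).
  apply (ratio_cv_of_coef_sums m Hm U U_init).
  assert (Hconst : exp (-1 - harmonic m) = / weight m 1)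
    by (rewrite weight_1, <- exp_Ropp; f_equal; ring).
  replace (exp (-1 - harmonic m) * RiemannInt pr) with (RiemannInt pr / weight m 1)
    by (rewrite Hconst; unfold Rdiv; ring).
  apply (partial_sums_cv m ltac:(lia) (coef m U) (coef_0 m Hm U U_init)
           (coef_rec m Hm U U_init (U_rec_cleared theta U HU))).
Qed.
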